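(* Let $G=K_{r_1,\dots,r_k}$ with partition sets $X_1,\dots,X_k$ ($|X_i|=r_i$), and assume $|V(G)|$ is odd. Let $\mathcal X=\{X_1,\dots,X_k\}$. Then $G$ has a good bisection if and only if $\mathcal X$ has a good subset.
   Context: A bisection of a graph $G$ is a bipartite spanning subgraph $H$ of $G$ with partition sets $V_1,V_2$ (every edge of $H$ joins $V_1$ and $V_2$) with $||V_1|-|V_2||\le 1$. It is good if $2d_H(v)\ge d_G(v)-1$ for every $v\in V(G)$. Let $\mathcal S_1=\{X_i: |X_i| \text{ odd}\}$ and $\mathcal S_0=\{X_i:|X_i|\text{ even}\}$. For $\mathcal A\subseteq\mathcal X$ let $s(\mathcal A)=\sum_{X_i\in\mathcal A}|X_i|$. A subset $\mathcal A\subseteq\mathcal X$ is good if there exist $\mathcal A'\subseteq\mathcal A$ and an integer $n$ with $0\le n\le|\mathcal S_0\setminus\mathcal A|$ such that $s(\mathcal A')=s(\mathcal A)/2+(m+2n-1)/2$, where $m=|\mathcal S_1\setminus\mathcal A|$. *)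

From mathcomp Require Import all_boot.
Set Implicit Arguments. Unset Strict Implicit. Unset Printing Implicit Defensive.

(* Complete multipartite graph K_{r_1,...,r_k} on the finite vertex type T:
   the partition set X_i is the set of vertices v with part v = i, and two
   vertices are adjacent iff they lie in different partition sets. *)
Definition partset (T : finType) (k : nat) (part : T -> 'I_k) (i : 'I_k) : {set T} :=
  [set v | part v == i].

Definition cmp_adj (T : finType) (k : nat) (part : T -> 'I_k) : rel T :=
  fun x y => part x != part y.

Definition deg (T : finType) (e : rel T) (v : T) : nat := #|[set y | e v y]|.

(* H (edge relation h) is a bisection of G (edge relation g) with partition
   sets V1 and V2 = ~: V1 : a bipartite spanning subgraph of G (every edge of H
   is an edge of G and joins V1 and V2), with ||V1| - |V2|| <= 1. *)
Definition is_bisection (T : finType) (g h : rel T) (V1 : {set T}) : Prop :=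
  (forall x y, h x y = h y x) /\
  (forall x y, h x y -> g x y) /\
  (forall x y, h x y -> (x \in V1) != (y \in V1)) /\
  (#|V1| <= #|~: V1| + 1) /\ (#|~: V1| <= #|V1| + 1).

(* good: 2 d_H(v) >= d_G(v) - 1 for every vertex v (over the integers,
   i.e. 2 d_H(v) + 1 >= d_G(v)). *)
Definition good_bisection (T : finType) (g h : rel T) (V1 : {set T}) : Prop :=
  is_bisection g h V1 /\ (forall v, deg g v <= 2 * deg h v + 1).

Definition s_of (k : nat) (r : 'I_k -> nat) (A : {set 'I_k}) : nat :=
  \sum_(i in A) r i.

Definition S1 (k : nat) (r : 'I_k -> nat) : {set 'I_k} := [set i | odd (r i)].
Definition S0 (k : nat) (r : 'I_k -> nat) : {set 'I_k} := [set i | ~~ odd (r i)].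

(* A is good iff there are A' \subset A and n with 0 <= n <= |S_0 \ A| such
   that s(A') = s(A)/2 + (m + 2n - 1)/2, m = |S_1 \ A|.  Multiplying by 2
   (an exact equivalence over the rationals) this reads
   2 s(A') + 1 = s(A) + m + 2n, stated in nat. *)
Definition good_subset (k : nat) (r : 'I_k -> nat) (A : {set 'I_k}) : Prop :=
  exists (A' : {set 'I_k}) (n : nat),
    A' \subset A /\ n <= #|S0 r :\: A| /\
    2 * s_of r A' + 1 = s_of r A + #|S1 r :\: A| + 2 * n.

(* Let S be the smaller side of a bisection, so 2|S| + 1 = |V|, and split
   each part X_i into s_i vertices in S and l_i outside.  Keeping every edge
   of G between the sides is optimal, and then a vertex of X_i is good iff
   l_i <= s_i + 2 (vertex in S) or s_i <= l_i (vertex outside S).  So each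
   part is either not split at all, or split as evenly as possible, or (for
   even r_i) split r_i/2 - 1 : r_i/2 + 1.  Recording the unsplit parts as A,
   those inside S as A', and the uneven even splits as a set of size n, the
   equation 2|S| + 1 = |V| becomes exactly 2 s(A') + 1 = s(A) + m + 2n. *)
From mathcomp Require Import all_boot zify.
Set Implicit Arguments.
Unset Strict Implicit.
Unset Printing Implicit Defensive.

Lemma exists_subset_card (T : finType) (B : {set T}) n :
  n <= #|B| -> exists2 D : {set T}, D \subset B & #|D| = n.
Proof.
rewrite -bin_gt0 -cards_draws card_gt0 => /set0Pn [D].
by rewrite inE => /andP [sDB /eqP cD]; exists D.
Qed.

Lemma deg_subrel (T : finType) (e e' : rel T) v :
  (forall x y, e x y -> e' x y) -> deg e v <= deg e' v.
Proof.
by move=> ee'; apply/subset_leq_card/subsetP => y; rewrite !inE => /ee'.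
Qed.

Lemma bisection_small_side (T : finType) (g h : rel T) (V1 : {set T}) :
  is_bisection g h V1 -> odd #|T| ->
  exists2 S : {set T}, 2 * #|S| + 1 = #|T| &
    forall x y, h x y -> (x \in S) != (y \in S).
Proof.
case=> _ [_ [crossV1 [le1 le2]]] oddT; have cardC := cardsC V1.
have [ltV1|geV1] := ltnP #|V1| #|~: V1|.
- by exists V1 => //; move: oddT; rewrite -cardC; lia.
- exists (~: V1) => [|x y /crossV1]; first by move: oddT; rewrite -cardC; lia.
  by rewrite !inE; case: (x \in V1); case: (y \in V1).
Qed.

(* A part split into [s] vertices on the smaller side and [l] on the larger one
   leaves all of its vertices good. *)
Definition split_ok (s l : nat) : bool :=
  ((0 < s) ==> (l <= s + 2)) && ((0 < l) ==> (s <= l)).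

(* [c i] vertices of the part of size [r i] go to the smaller side. *)
Definition good_split (k : nat) (r c : 'I_k -> nat) : Prop :=
  [/\ forall i, c i <= r i, forall i, split_ok (c i) (r i - c i)
    & 2 * \sum_(i < k) c i + 1 = \sum_(i < k) r i].

Section CompleteMultipartite.

Variables (T : finType) (k : nat) (part : T -> 'I_k).
Local Notation X := (partset part).
Local Notation G := (cmp_adj part).

Lemma sum_card_setI_partset (B : {set T}) : \sum_(i < k) #|B :&: X i| = #|B|.
Proof.
rewrite -sum1_card (partition_big part predT) //=.
by apply: eq_bigr => i _; rewrite -sum1_card; apply: eq_bigl => v; rewrite !inE.
Qed.

Lemma sum_card_partset : \sum_(i < k) #|X i| = #|T|.
Proof.
rewrite -cardsT -(sum_card_setI_partset setT).
by apply: eq_bigr => i _; rewrite setTI.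
Qed.

Lemma deg_cmp_adj v : deg G v = #|T| - #|X (part v)|.
Proof.
rewrite -(cardsC (X (part v))) addKn /deg.
by apply: eq_card => y; rewrite !inE /cmp_adj eq_sym.
Qed.

Lemma cardsD_partset (B : {set T}) i : #|B :\: X i| = #|B| - #|B :&: X i|.
Proof. by rewrite -(cardsID (X i) B) addKn. Qed.

Definition cross_adj (S : {set T}) : rel T :=
  fun x y => G x y && ((x \in S) != (y \in S)).

Lemma deg_cross_adj S v :
  deg (cross_adj S) v = if v \in S then #|~: S| - #|~: S :&: X (part v)|
                        else #|S| - #|S :&: X (part v)|.
Proof.
rewrite -!cardsD_partset /deg /cross_adj /cmp_adj.
by case: (v \in S); apply: eq_card => y; rewrite !inE eq_sym; case: (y \in S).
Qed.

Lemma card_setI_partset_split (S : {set T}) i :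
  #|S :&: X i| + #|~: S :&: X i| = #|X i|.
Proof. by rewrite -(cardsID S (X i)) setDE !(setIC (X i)). Qed.

Section SmallSide.

Variable S : {set T}.
Hypothesis card_S : 2 * #|S| + 1 = #|T|.

Lemma good_cross_adjE v :
  (deg G v <= 2 * deg (cross_adj S) v + 1) =
  (if v \in S then #|~: S :&: X (part v)| <= #|S :&: X (part v)| + 2
   else #|S :&: X (part v)| <= #|~: S :&: X (part v)|).
Proof.
have := card_setI_partset_split S (part v); have := cardsC S.
have := subset_leq_card (subsetIl S (X (part v))).
have := subset_leq_card (subsetIl (~: S) (X (part v))).
rewrite deg_cmp_adj deg_cross_adj; case: (v \in S); lia.
Qed.

Lemma good_cross_adj_split_ok :
  (forall v, deg G v <= 2 * deg (cross_adj S) v + 1) <->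
  (forall i, split_ok #|S :&: X i| #|~: S :&: X i|).
Proof.
split=> [good i | ok v].
- apply/andP; split; apply/implyP; rewrite card_gt0 => /set0Pn [v];
    rewrite !inE => /andP [vS /eqP <-]; have := good v;
    by rewrite good_cross_adjE ?vS ?(negbTE vS).
- rewrite good_cross_adjE; have /andP [/implyP okS /implyP okC] := ok (part v).
  case vS: (v \in S); [apply: okS | apply: okC];
    by rewrite card_gt0; apply/set0Pn; exists v; rewrite !inE vS /=.
Qed.

End SmallSide.

Lemma good_bisection_split_ok : odd #|T| ->
  (exists (h : rel T) (V1 : {set T}), good_bisection G h V1) <->
  exists2 S : {set T}, 2 * #|S| + 1 = #|T| &
    forall i, split_ok #|S :&: X i| #|~: S :&: X i|.
Proof.
move=> oddT; split=> [[h [V1 [bisV1 good]]] | [S card_S ok]].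
- have [S card_S crossS] := bisection_small_side bisV1 oddT.
  exists S => //; apply/(good_cross_adj_split_ok card_S) => v.
  apply: leq_trans (good v) _; rewrite leq_add2r leq_mul2l /=.
  apply: deg_subrel => x y hxy; apply/andP; split; last exact: crossS.
  by have [_ [hG _]] := bisV1; apply: hG.
- exists (cross_adj S), S; split; last exact/good_cross_adj_split_ok.
  have := cardsC S; split; [|split; [|split]].
  + by move=> x y; rewrite /cross_adj /cmp_adj eq_sym [(x \in S) == _]eq_sym.
  + by move=> x y /andP [].
  + by move=> x y /andP [].
  + lia.
Qed.

Lemma exists_setI_partset_card (c : 'I_k -> nat) :
  (forall i, c i <= #|X i|) -> exists S : {set T}, forall i, #|S :&: X i| = c i.
Proof.
move=> le_c.
have [D sDX cardD] := fin_all_exists2 (fun i => exists_subset_card (le_c i)).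
exists [set v | v \in D (part v)] => i; rewrite -cardD.
apply: eq_card => v; rewrite !inE.
case: (part v =P i) => [<- | ne]; first by rewrite andbT.
by rewrite andbF; apply/esym/negP => /(subsetP (sDX i)); rewrite inE => /eqP.
Qed.

Lemma exists_split_set_good_split :
  (exists2 S : {set T}, 2 * #|S| + 1 = #|T| &
     forall i, split_ok #|S :&: X i| #|~: S :&: X i|) <->
  exists c, good_split (fun i => #|X i|) c.
Proof.
have splitC S i : #|~: S :&: X i| = #|X i| - #|S :&: X i|.
  by rewrite -(card_setI_partset_split S i) addKn.
split=> [[S card_S ok] | [c [le_c ok sum_c]]].
- exists (fun i => #|S :&: X i|); split=> [i | i |].
  + by rewrite -(card_setI_partset_split S i) leq_addr.
  + by rewrite -splitC.
  + by rewrite sum_card_setI_partset sum_card_partset.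
- have [S cardS] := exists_setI_partset_card le_c.
  exists S => [|i]; last by rewrite splitC cardS.
  rewrite -sum_card_partset -sum_c -(sum_card_setI_partset S).
  by under eq_bigr do rewrite cardS.
Qed.

End CompleteMultipartite.

Section Counting.

Variables (k : nat) (r : 'I_k -> nat).

Lemma s_of_sum_mem (A : {set 'I_k}) : s_of r A = \sum_(i < k) (i \in A) * r i.
Proof. by rewrite /s_of big_mkcond; apply: eq_bigr => i _; rewrite mulnbl. Qed.

Lemma card_sum_mem (A : {set 'I_k}) : #|A| = \sum_(i < k) (i \in A).
Proof.
by rewrite -sum1_card big_mkcond; apply: eq_bigr => i _; case: (i \in A).
Qed.

Lemma sum_count_identity (A A' D : {set 'I_k}) (c : 'I_k -> nat) :
  (forall i, 2 * ((i \in A') * r i) + r i =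
             (i \in A) * r i + (i \in S1 r :\: A) + 2 * (i \in D) + 2 * c i) ->
  (2 * \sum_(i < k) c i + 1 = \sum_(i < k) r i) <->
  (2 * s_of r A' + 1 = s_of r A + #|S1 r :\: A| + 2 * #|D|).
Proof.
move=> count_i.
have : \sum_(i < k) (2 * ((i \in A') * r i) + r i) =
       \sum_(i < k) ((i \in A) * r i + (i \in S1 r :\: A) + 2 * (i \in D) + 2 * c i).
  by apply: eq_bigr => i _; apply: count_i.
rewrite !big_split /= big1_eq -!s_of_sum_mem -!card_sum_mem.
(* generalizing the sums keeps [lia] from looking inside them *)
move: (s_of r A) (s_of r A') #|S1 r :\: A| #|D|.
move: (\sum_(i < k) c i) (\sum_(i < k) r i).
move=> ??????; lia.
Qed.

Lemma good_subset_of_good_split c : good_split r c -> exists A, good_subset r A.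
Proof.
case=> le_c ok sum_c.
pose A := [set i | (c i == 0) || (c i == r i)].
pose A' := [set i | c i == r i].
pose D := [set i | (i \notin A) && (2 * c i + 2 == r i)].
exists A, A', #|D|; split; [|split].
- by apply/subsetP => i; rewrite !inE => ->; rewrite orbT.
- apply/subset_leq_card/subsetP => i; rewrite !inE => /andP [-> /eqP <-] /=.
  by rewrite addn2 /= oddM.
- apply/(sum_count_identity (c := c)) => // i; rewrite !inE.
  move: (le_c i) (ok i) (odd_double_half (r i)); rewrite /split_ok.
  by case: odd => /=; lia.
Qed.

Lemma good_split_of_good_subset A :
  (forall i, 0 < r i) -> good_subset r A -> exists c, good_split r c.
Proof.
move=> r_gt0 [A' [n [sA'A [le_n sum_A]]]].
have [D sD cardD] := exists_subset_card le_n.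
pose c i :=
  if i \in A' then r i else if i \in A then 0 else (r i)./2 - (i \in D).
have count_i i : [/\ c i <= r i, split_ok (c i) (r i - c i) &
  2 * ((i \in A') * r i) + r i =
  (i \in A) * r i + (i \in S1 r :\: A) + 2 * (i \in D) + 2 * c i].
  have := subsetP sD i; have := subsetP sA'A i; rewrite /c /split_ok !inE.
  move: (r_gt0 i) (odd_double_half (r i)).
  by case: (i \in A'); case: (i \in A); case: (i \in D); case: odd => /=;
    split; lia.
exists c; split=> [i | i |]; try by case: (count_i i).
apply/(sum_count_identity (A := A) (A' := A') (D := D)); rewrite ?cardD // => i.
by case: (count_i i).
Qed.

End Counting.

Theorem proposition3p3 (T : finType) (k : nat) (part : T -> 'I_k)
  (Hnonempty : forall i : 'I_k, exists v : T, part v = i)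
  (Hodd : odd #|T|) :
  (exists (h : rel T) (V1 : {set T}), good_bisection (cmp_adj part) h V1) <->
  (exists A : {set 'I_k},
      good_subset (fun i : 'I_k => #|partset part i|) A).
Proof.
rewrite good_bisection_split_ok // exists_split_set_good_split.
split=> [[c] | [A]]; first exact: good_subset_of_good_split.
apply: good_split_of_good_subset => i /=.
have [v <-] := Hnonempty i.
by rewrite card_gt0; apply/set0Pn; exists v; rewrite inE.
Qed.
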